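(* Let $R$ be a ring, $*\in\{l,r,\emptyset\}$, $\mathfrak{a}\in\mathrm{ass}\,\mathbb{L}_*(R)$, and $\pi:R\to\overline{R}:=R/\mathfrak{a}$, $r\mapsto\overline{r}=r+\mathfrak{a}$. Then \begin{enumerate} \item $T_{*,\mathfrak{a}}(R)=\pi^{-1}(S_*(\overline{R}))$; \item $\mathbb{Q}_{*,\mathfrak{a}}(R)\simeq Q_*(\overline{R})$, an $R$-isomorphism; \item $T_{*,\mathfrak{a}}(R)=\sigma^{-1}(\mathbb{Q}_{*,\mathfrak{a}}(R)^\times)=\sigma^{-1}(Q_*(\overline{R})^\times)$, where $\sigma:R\to\mathbb{Q}_{*,\mathfrak{a}}(R)\simeq Q_*(\overline{R})$, $r\mapsto\frac r1$. \end{enumerate}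
   Context: Rings are associative with $1$. Multiplicative set: $SS\subseteq S$, $1\in S$, $0\notin S$. $R\langle S^{-1}\rangle=R\langle X_S\rangle/I_S$ ($R\langle X_S\rangle$ freely generated by $R$ and noncommuting $x_s$, $s\in S$; $I_S$ generated by $sx_s-1,x_ss-1$); $\mathrm{ass}_R(S)=\ker(R\to R\langle S^{-1}\rangle)$. $S$ is left (resp. right) localizable if $R\langle S^{-1}\rangle\ne0$ and every element has the form $(x_s+I_S)(r+I_S)$ (resp. $(r+I_S)(x_s+I_S)$); localizable if both; $\mathbb{L}_*(R)$ is the set of $*$-localizable sets ($l$: left, $r$: right, $\emptyset$: both), $\mathbb{L}_*(R,\mathfrak{a})=\{S\in\mathbb{L}_*(R):\mathrm{ass}_R(S)=\mathfrak{a}\}$ and $\mathrm{ass}\,\mathbb{L}_*(R)=\{\mathrm{ass}_R(S):S\in\mathbb{L}_*(R)\}$. $T_{*,\mathfrak{a}}(R):=\bigcup_{S\in\mathbb{L}_*(R,\mathfrak{a})}S$; it is the largest element of $\mathbb{L}_*(R,\mathfrak{a})$, and $\mathbb{Q}_{*,\mathfrak{a}}(R):=R\langle T_{*,\mathfrak{a}}(R)^{-1}\rangle$. For a ring $A$, a regular left (right) Ore set is a multiplicative set $T$ of regular elements with $Ta\cap At\ne\emptyset$ (resp. $aT\cap tA\neq\emptyset$) for all $a\in A,t\in T$; there is a largest regular left Ore set $S_l(A)$, a largest regular right Ore set $S_r(A)$ and a largest regular (two-sided) Ore set $S_\emptyset(A)=S(A)$; $Q_l(A)=S_l(A)^{-1}A$,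 $Q_r(A)=AS_r(A)^{-1}$, $Q_\emptyset(A)=S(A)^{-1}A$. $Q^\times$ is the unit group. *)

From HB Require Import structures.
From mathcomp Require Import all_boot all_algebra.
Set Implicit Arguments. Unset Strict Implicit. Unset Printing Implicit Defensive.
Import GRing.Theory.
Local Open Scope ring_scope.

(* two-sided unit (no unitRing structure is assumed) *)
Definition is_unit (A : nzRingType) (x : A) : Prop :=
  exists y : A, x * y = 1 /\ y * x = 1.

Definition mult_set (R : nzRingType) (S : R -> Prop) : Prop :=
  S 1 /\ ~ S 0 /\ (forall x y, S x -> S y -> S (x * y)).

Definition inverts (R A : nzRingType) (S : R -> Prop) (f : R -> A) : Prop :=
  forall s, S s -> is_unit (f s).

(* sigma : R -> A is (the canonical map into) R<S^{-1}>, characterised by its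
   universal property among (nonzero) rings; A is nonzero since nzRingType. *)
Definition univ_loc (R : nzRingType) (S : R -> Prop) (A : nzRingType)
    (sigma : {rmorphism R -> A}) : Prop :=
  inverts S sigma /\
  forall (B : nzRingType) (g : {rmorphism R -> B}), inverts S g ->
    exists h : {rmorphism A -> B},
      (forall r, h (sigma r) = g r) /\
      (forall h' : {rmorphism A -> B}, (forall r, h' (sigma r) = g r) ->
         forall x, h' x = h x).

(* ass_R(S) = ker (R -> R<S^{-1}>): the elements killed by every S-inverting
   ring morphism (= all of R when R<S^{-1}> = 0). *)
Definition ass (R : nzRingType) (S : R -> Prop) (r : R) : Prop :=
  forall (B : nzRingType) (g : {rmorphism R -> B}), inverts S g -> g r = 0.

Inductive side := Lside | Rside | Bside.

(* left localizable: R<S^{-1}> <> 0 and every element is s^{-1} r *)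
Definition left_loc (R : nzRingType) (S : R -> Prop) : Prop :=
  exists (A : nzRingType) (sigma : {rmorphism R -> A}), univ_loc S sigma /\
    forall q : A, exists s r, S s /\ sigma s * q = sigma r.

Definition right_loc (R : nzRingType) (S : R -> Prop) : Prop :=
  exists (A : nzRingType) (sigma : {rmorphism R -> A}), univ_loc S sigma /\
    forall q : A, exists s r, S s /\ q * sigma s = sigma r.

Definition localizable (R : nzRingType) (st : side) (S : R -> Prop) : Prop :=
  mult_set S /\
  match st with
  | Lside => left_loc S
  | Rside => right_loc S
  | Bside => left_loc S /\ right_loc S
  end.

Definition loc_ass (R : nzRingType) (st : side) (a : R -> Prop) (S : R -> Prop) : Prop :=
  localizable st S /\ (forall r, ass S r <-> a r).

Definition in_ass_L (R : nzRingType) (st : side) (a : R -> Prop) : Prop :=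
  exists S, loc_ass st a S.

Definition Tmax (R : nzRingType) (st : side) (a : R -> Prop) (r : R) : Prop :=
  exists S, loc_ass st a S /\ S r.

Definition regular (A : nzRingType) (x : A) : Prop :=
  (forall y, x * y = 0 -> y = 0) /\ (forall y, y * x = 0 -> y = 0).

Definition left_ore_cond (A : nzRingType) (T : A -> Prop) : Prop :=
  forall a t, T t -> exists t' a', T t' /\ t' * a = a' * t.

Definition right_ore_cond (A : nzRingType) (T : A -> Prop) : Prop :=
  forall a t, T t -> exists t' a', T t' /\ a * t' = t * a'.

Definition reg_ore_set (A : nzRingType) (st : side) (T : A -> Prop) : Prop :=
  mult_set T /\ (forall t, T t -> regular t) /\
  match st with
  | Lside => left_ore_cond T
  | Rside => right_ore_cond T
  | Bside => left_ore_cond T /\ right_ore_cond T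
  end.

(* S_*(A): the largest regular *-Ore set, i.e. the union of all of them *)
Definition Smax (A : nzRingType) (st : side) (x : A) : Prop :=
  exists T, reg_ore_set st T /\ T x.

(* phi : A -> Q is a ring of fractions of A w.r.t. T: T^{-1}A (left, used for
   * = l and * = empty) or A T^{-1} (right, used for * = r). *)
Definition frac_ring (A : nzRingType) (st : side) (T : A -> Prop) (Q : nzRingType)
    (phi : {rmorphism A -> Q}) : Prop :=
  inverts T phi /\
  match st with
  | Rside =>
      (forall q : Q, exists t a, T t /\ q * phi t = phi a) /\
      (forall a, phi a = 0 -> exists t, T t /\ a * t = 0)
  | _ =>
      (forall q : Q, exists t a, T t /\ phi t * q = phi a) /\
      (forall a, phi a = 0 -> exists t, T t /\ t * a = 0)
  end.

(* Let S be in L_*(R, a) and let sigma : R -> R<S^-1>. Since ker sigma = a = ker pi,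
   the Ore condition and the regularity that S enjoys inside R<S^-1> descend to
   R/a, so pi(S) is a regular *-Ore set and S lies in pi^-1(S_*(R/a)).
   Conversely pi^-1(S_*(R/a)) belongs to L_*(R, a), with universal localization
   R -> R/a -> Q_*(R/a): a ring map inverting it inverts S, hence kills
   ass_R(S) = a and factors through R/a, where the ring of fractions has the
   universal property. This gives (1); (2) is the uniqueness of universal
   localizations, and (3) holds because the elements of R/a that become units
   in Q_*(R/a) form a regular *-Ore set. Rings of fractions are built as classes
   of pairs (t, x) standing for t^-1 x; right fractions are left fractions in
   the converse ring. *)

From HB Require Import structures.
From mathcomp Require Import all_boot all_algebra.
From mathcomp Require Import boolp.
Import GRing.Theory.
Local Open Scope ring_scope.
Set Implicit Arguments. Unset Strict Implicit. Unset Printing Implicit Defensive.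

Section UnitRegular.
Variable A : nzRingType.
Implicit Types x y u v : A.

Lemma regular_mulIr x u v : regular x -> u * x = v * x -> u = v.
Proof.
by move=> [_ rx] e; apply/eqP; rewrite -subr_eq0; apply/eqP/rx; rewrite mulrBl e subrr.
Qed.

Lemma regular_mulrI x u v : regular x -> x * u = x * v -> u = v.
Proof.
by move=> [lx _] e; apply/eqP; rewrite -subr_eq0; apply/eqP/lx; rewrite mulrBr e subrr.
Qed.

Lemma regularM x y : regular x -> regular y -> regular (x * y).
Proof.
move=> [x1 x2] [y1 y2]; split=> z; first by rewrite -mulrA => /x1 /y1.
by rewrite mulrA => /y2 /x2.
Qed.

Lemma regular0 : ~ regular (0 : A).
Proof. by move=> [h _]; have /eqP := h 1 (mul0r 1); rewrite oner_eq0. Qed.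

Lemma is_unit0 : ~ is_unit (0 : A).
Proof. by move=> [y [h _]]; move/eqP: h; rewrite mul0r eq_sym oner_eq0. Qed.

Lemma is_unitM x y : is_unit x -> is_unit y -> is_unit (x * y).
Proof.
move=> [x' [x1 x2]] [y' [y1 y2]]; exists (y' * x').
by rewrite !mulrA -(mulrA x) y1 mulr1 x1 -(mulrA y') x2 mulr1 y2.
Qed.

Lemma is_unit_mulrI x u v : is_unit x -> x * u = x * v -> u = v.
Proof. by move=> [y [_ yx]] e; rewrite -[u]mul1r -yx -mulrA e mulrA yx mul1r. Qed.

Lemma is_unit_mulIr x u v : is_unit x -> u * x = v * x -> u = v.
Proof. by move=> [y [xy _]] e; rewrite -[u]mulr1 -xy mulrA e -mulrA xy mulr1. Qed.

Lemma is_unit_regular x : is_unit x -> regular x.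
Proof.
move=> ux; split=> z e.
  by apply: (is_unit_mulrI ux); rewrite e mulr0.
by apply: (is_unit_mulIr ux); rewrite e mul0r.
Qed.

End UnitRegular.

Lemma is_unit_rmorph (A B : nzRingType) (f : {rmorphism A -> B}) x :
  is_unit x -> is_unit (f x).
Proof. by move=> [y [h1 h2]]; exists (f y); rewrite -!rmorphM h1 h2 rmorph1. Qed.

Definition on_side (st : side) (Pl Pr : Prop) : Prop :=
  match st with Lside => Pl | Rside => Pr | Bside => Pl /\ Pr end.

Lemma on_sideP st (Pl Pr : Prop) :
  (st <> Rside -> Pl) -> (st <> Lside -> Pr) -> on_side st Pl Pr.
Proof. by case: st => /= hl hr; [apply: hl | apply: hr | split; [apply: hl | apply: hr]]. Qed.

Lemma on_side_l st (Pl Pr : Prop) : st <> Rside -> on_side st Pl Pr -> Pl.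
Proof. by case: st => //= _ []. Qed.

Lemma on_side_r st (Pl Pr : Prop) : st <> Lside -> on_side st Pl Pr -> Pr.
Proof. by case: st => //= _ []. Qed.

Lemma reg_ore_left st (A : nzRingType) (T : A -> Prop) :
  st <> Rside -> reg_ore_set st T -> left_ore_cond T.
Proof. by move=> hst [_ [_]]; apply: on_side_l. Qed.

Lemma reg_ore_right st (A : nzRingType) (T : A -> Prop) :
  st <> Lside -> reg_ore_set st T -> right_ore_cond T.
Proof. by move=> hst [_ [_]]; apply: on_side_r. Qed.

Definition left_fracs (A Q : nzRingType) (T : A -> Prop) (phi : A -> Q) : Prop :=
  forall q, exists t a, T t /\ phi t * q = phi a.

Definition right_fracs (A Q : nzRingType) (T : A -> Prop) (phi : A -> Q) : Prop :=
  forall q, exists t a, T t /\ q * phi t = phi a.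

Section FracRing.
Variables (st : side) (A Q : nzRingType) (T : A -> Prop) (phi : {rmorphism A -> Q}).
Hypothesis phiT : frac_ring st T phi.

Lemma frac_ring_inj : (forall t, T t -> regular t) -> injective phi.
Proof.
move=> Treg; apply: raddf_inj => a a0; case: st phiT => [] [_ [_ ker]];
  have [t [/Treg [rt lt] ta0]] := ker a a0; by [apply: rt | apply: lt].
Qed.

Lemma frac_ring_left_fracs : st <> Rside -> left_fracs T phi.
Proof. by case: st phiT => // [] [_ []]. Qed.

End FracRing.

Lemma left_to_right_fracs (A Q : nzRingType) (T : A -> Prop) (phi : {rmorphism A -> Q}) :
  inverts T phi -> right_ore_cond T -> left_fracs T phi -> right_fracs T phi.
Proof.
move=> phiT Tore lfr q; have [t [a [Tt e]]] := lfr q; have [y [ty yt]] := phiT t Tt.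
have [t' [a' [Tt' e']]] := Tore a t Tt; exists t', a'; split=> //.
have -> : q = y * phi a by rewrite -e mulrA yt mul1r.
by rewrite -mulrA -rmorphM e' rmorphM mulrA yt mul1r.
Qed.

Lemma frac_ring_right_fracs st (A Q : nzRingType) (T : A -> Prop) (phi : {rmorphism A -> Q}) :
  frac_ring st T phi -> st <> Lside -> reg_ore_set st T -> right_fracs T phi.
Proof.
case: st => // [[_ []] //| [phiT [lfr _]] _ HT].
exact: left_to_right_fracs phiT (reg_ore_right (st := Bside) _ HT) lfr.
Qed.

Section OreFractions.
Variables (A : nzRingType) (T : A -> Prop).
Hypothesis HT : reg_ore_set Lside T.
Let T1 : T 1 := proj1 (proj1 HT).
Let TM : forall x y, T x -> T y -> T (x * y) := proj2 (proj2 (proj1 HT)).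
Let Treg : forall t, T t -> regular t := proj1 (proj2 HT).
Let Tore : left_ore_cond T := proj2 (proj2 HT).

Record frac := Frac { fden : A; fnum : A; fdenP : T fden }.

(* [fden p]^-1 [fnum p] = [fden q]^-1 [fnum q] says that every common left
   multiple of the denominators sends the numerators to the same element;
   unlike the usual definition, this needs no Ore witness. *)
Definition frac_eqv (p q : frac) : Prop :=
  forall u u', u * fden p = u' * fden q -> u * fnum p = u' * fnum q.

Lemma frac_eqv_refl p : frac_eqv p p.
Proof. by move=> u u' /(regular_mulIr (Treg (fdenP p))) ->. Qed.

Lemma frac_eqv_sym p q : frac_eqv p q -> frac_eqv q p.
Proof. by move=> e u u' h; symmetry; apply: e. Qed.

Lemma frac_eqv_trans p q r : frac_eqv p q -> frac_eqv q r -> frac_eqv p r.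
Proof.
move=> e1 e2 u u'' h.
have [t [x [Tt tx]]] := Tore (u * fden p) (fdenP q).
apply: (regular_mulrI (Treg Tt)); rewrite !mulrA.
have -> : t * u * fnum p = x * fnum q by apply: e1; rewrite -mulrA tx.
by apply: e2; rewrite -tx mulrA -!mulrA h.
Qed.

Definition frac_class := {C : frac -> Prop | exists p, C = frac_eqv p}.

Definition class_of (p : frac) : frac_class := exist _ (frac_eqv p) (ex_intro _ p erefl).
Definition class_repr (x : frac_class) : frac := projT1 (cid (proj2_sig x)).

Lemma class_of_eq p q : class_of p = class_of q <-> frac_eqv p q.
Proof.
split=> [[->]|e]; first exact: frac_eqv_refl.
apply: eq_exist; apply: funext => r; apply: propext.
by split; apply: frac_eqv_trans; [apply: frac_eqv_sym|].
Qed.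

Lemma class_reprK x : class_of (class_repr x) = x.
Proof.
rewrite /class_repr; case: (cid _) => p hp /=.
by case: x hp => C hC /= hp; apply: eq_exist; rewrite hp.
Qed.

Lemma class_repr_eqv p : frac_eqv (class_repr (class_of p)) p.
Proof. by apply/class_of_eq; rewrite class_reprK. Qed.

(* [mkfrac d n] stands for d^-1 n; it is the junk fraction 1^-1 0 unless [T d]. *)
Definition mkfrac (d n : A) : frac :=
  if pselect (T d) is left Td then Frac n Td else Frac 0 T1.

Lemma mkfrac_den d n : T d -> fden (mkfrac d n) = d.
Proof. by rewrite /mkfrac; case: pselect. Qed.

Lemma mkfrac_num d n : T d -> fnum (mkfrac d n) = n.
Proof. by rewrite /mkfrac; case: pselect. Qed.

Definition qfrac d n := class_of (mkfrac d n).

Lemma qfracP x : exists d n, T d /\ x = qfrac d n.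
Proof.
rewrite -(class_reprK x); case: (class_repr x) => d n Td; exists d, n; split=> //.
apply/class_of_eq => u u'; rewrite mkfrac_num // mkfrac_den //.
by move/(regular_mulIr (Treg Td)) ->.
Qed.

Lemma qfrac_eq d n d' n' : T d -> T d' ->
  qfrac d n = qfrac d' n' <-> (forall u u', u * d = u' * d' -> u * n = u' * n').
Proof. by move=> Td Td'; rewrite /qfrac class_of_eq /frac_eqv !mkfrac_den ?mkfrac_num. Qed.

Lemma qfrac_num_inj d n n' : T d -> qfrac d n = qfrac d n' <-> n = n'.
Proof.
move=> Td; rewrite qfrac_eq //; split=> [h|-> u u' /(regular_mulIr (Treg Td)) -> //].
by rewrite -[n]mul1r -[n']mul1r; apply: h.
Qed.

Lemma qfrac_expand d n d' x : T d -> T d' -> d' = x * d -> qfrac d' (x * n) = qfrac d n.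
Proof.
move=> Td Td' e; apply/qfrac_eq => // u u'.
by rewrite e !mulrA => /(regular_mulIr (Treg Td)) ->.
Qed.

Lemma common_den2 d1 d2 : T d1 -> T d2 ->
  exists d x y, [/\ T d, d = x * d1 & d = y * d2].
Proof.
move=> T1d T2d; have [u [v [Tu h]]] := Tore d1 T2d.
by exists (u * d1), u, v; split=> //; apply: TM.
Qed.

Lemma common_den3 d1 d2 d3 : T d1 -> T d2 -> T d3 ->
  exists d x y z, [/\ T d, d = x * d1, d = y * d2 & d = z * d3].
Proof.
move=> T1d T2d T3d; have [e [x [y [Te h1 h2]]]] := common_den2 T1d T2d.
have [u [v [Tu h]]] := Tore e T3d.
exists (u * e), (u * x), (u * y), v; split; rewrite -?mulrA -?h1 -?h2 //.
exact: TM.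
Qed.

Lemma qfrac_ind2 (P : frac_class -> frac_class -> Prop) :
  (forall d a b, T d -> P (qfrac d a) (qfrac d b)) -> forall x y, P x y.
Proof.
move=> H x y; have [d1 [n1 [T1d ->]]] := qfracP x; have [d2 [n2 [T2d ->]]] := qfracP y.
have [d [u [v [Td h1 h2]]]] := common_den2 T1d T2d.
by rewrite -(qfrac_expand n1 T1d Td h1) -(qfrac_expand n2 T2d Td h2); apply: H.
Qed.

Lemma qfrac_ind3 (P : frac_class -> frac_class -> frac_class -> Prop) :
  (forall d a b c, T d -> P (qfrac d a) (qfrac d b) (qfrac d c)) -> forall x y z, P x y z.
Proof.
move=> H x y z; have [d1 [n1 [T1d ->]]] := qfracP x.
have [d2 [n2 [T2d ->]]] := qfracP y; have [d3 [n3 [T3d ->]]] := qfracP z.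
have [d [u [v [w [Td h1 h2 h3]]]]] := common_den3 T1d T2d T3d.
rewrite -(qfrac_expand n1 T1d Td h1) -(qfrac_expand n2 T2d Td h2).
by rewrite -(qfrac_expand n3 T3d Td h3); apply: H.
Qed.

Definition ore_den (a : A) (p : frac) : A := projT1 (cid (Tore a (fdenP p))).
Definition ore_num (a : A) (p : frac) : A :=
  projT1 (cid (projT2 (cid (Tore a (fdenP p))))).

Lemma oreP a p : T (ore_den a p) /\ ore_den a p * a = ore_num a p * fden p.
Proof. by rewrite /ore_num /ore_den; case: cid => t /= h; case: cid. Qed.

(* With Ore witnesses t d1 = x d2, d1^-1 n1 + d2^-1 n2 = (t d1)^-1 (t n1 + x n2);
   with t n1 = x d2, (d1^-1 n1) (d2^-1 n2) = (t d1)^-1 (x n2). *)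
Definition frac_add (p q : frac) : frac :=
  @Frac (ore_den (fden p) q * fden p)
        (ore_den (fden p) q * fnum p + ore_num (fden p) q * fnum q)
        (TM (proj1 (oreP _ _)) (fdenP p)).

Definition frac_mul (p q : frac) : frac :=
  @Frac (ore_den (fnum p) q * fden p) (ore_num (fnum p) q * fnum q)
        (TM (proj1 (oreP _ _)) (fdenP p)).

Definition frac_opp (p : frac) : frac := @Frac (fden p) (- fnum p) (fdenP p).

Lemma frac_addE p q p0 q0 d x y : frac_eqv p p0 -> frac_eqv q q0 -> T d ->
  d = x * fden p0 -> d = y * fden q0 ->
  frac_eqv (frac_add p q) (mkfrac d (x * fnum p0 + y * fnum q0)).
Proof.
move=> e1 e2 Td h1 h2 w w'; rewrite mkfrac_den // mkfrac_num //= => h.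
have [_ ho] := oreP (fden p) q.
rewrite !mulrDr !mulrA; congr (_ + _).
  by apply: e1; rewrite -!mulrA -h1 -h mulrA.
by apply: e2; rewrite -!mulrA -ho -h2 mulrA -h mulrA.
Qed.

Lemma frac_mulE p q p0 q0 z y : frac_eqv p p0 -> frac_eqv q q0 -> T (z * fden p0) ->
  z * fnum p0 = y * fden q0 ->
  frac_eqv (frac_mul p q) (mkfrac (z * fden p0) (y * fnum q0)).
Proof.
move=> e1 e2 Td h w w'; rewrite mkfrac_den // mkfrac_num //= => h'.
have [_ ho] := oreP (fnum p) q.
rewrite !mulrA; apply: e2; rewrite -!mulrA -ho -h mulrA.
by rewrite [RHS]mulrA; apply: e1; rewrite -!mulrA.
Qed.

Definition qadd x y := class_of (frac_add (class_repr x) (class_repr y)).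
Definition qmul x y := class_of (frac_mul (class_repr x) (class_repr y)).
Definition qopp x := class_of (frac_opp (class_repr x)).
Definition q0 := qfrac 1 0.
Definition q1 := qfrac 1 1.

Lemma qfrac_add d1 n1 d2 n2 d x y : T d1 -> T d2 -> T d ->
  d = x * d1 -> d = y * d2 -> qadd (qfrac d1 n1) (qfrac d2 n2) = qfrac d (x * n1 + y * n2).
Proof.
move=> T1d T2d Td h1 h2; apply/class_of_eq.
have := @frac_addE _ _ (mkfrac d1 n1) (mkfrac d2 n2) d x y.
by rewrite !mkfrac_den // !mkfrac_num //; apply; try exact: class_repr_eqv.
Qed.

Lemma qfrac_mul d1 n1 d2 n2 z y : T d1 -> T d2 -> T (z * d1) ->
  z * n1 = y * d2 -> qmul (qfrac d1 n1) (qfrac d2 n2) = qfrac (z * d1) (y * n2).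
Proof.
move=> T1d T2d Td h; apply/class_of_eq.
have := @frac_mulE _ _ (mkfrac d1 n1) (mkfrac d2 n2) z y.
by rewrite !mkfrac_den // !mkfrac_num //; apply; try exact: class_repr_eqv.
Qed.

Lemma qfrac_opp d n : T d -> qopp (qfrac d n) = qfrac d (- n).
Proof.
move=> Td; apply/class_of_eq => u u' /=.
have e := @class_repr_eqv (mkfrac d n).
rewrite mkfrac_den // mkfrac_num // => h; rewrite !mulrN; congr (- _).
by move: (e u u'); rewrite mkfrac_den // mkfrac_num //; apply.
Qed.

Lemma qfrac_add_same d a b : T d -> qadd (qfrac d a) (qfrac d b) = qfrac d (a + b).
Proof. by move=> Td; rewrite (@qfrac_add _ _ _ _ d 1 1) ?mul1r. Qed.

Lemma qfrac0 d : T d -> qfrac d 0 = q0.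
Proof. by move=> Td; rewrite /q0 -(@qfrac_expand 1 0 d d) ?mulr0 ?mulr1. Qed.

Lemma qfrac1_mul a b : qmul (qfrac 1 a) (qfrac 1 b) = qfrac 1 (a * b).
Proof. by rewrite -[in RHS](mul1r a) (@qfrac_mul _ _ _ _ 1 a) ?mul1r ?mulr1. Qed.

Lemma qaddA : associative qadd.
Proof. by apply: qfrac_ind3 => d a b c Td; rewrite !qfrac_add_same // addrA. Qed.

Lemma qaddC : commutative qadd.
Proof. by apply: qfrac_ind2 => d a b Td; rewrite !qfrac_add_same // addrC. Qed.

Lemma qadd0 : left_id q0 qadd.
Proof.
by move=> x; have [d [n [Td ->]]] := qfracP x; rewrite -(qfrac0 Td) qfrac_add_same ?add0r.
Qed.

Lemma qaddN : left_inverse q0 qopp qadd.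
Proof.
move=> x; have [d [n [Td ->]]] := qfracP x.
by rewrite qfrac_opp // qfrac_add_same ?addNr ?qfrac0.
Qed.

Lemma qmulA : associative qmul.
Proof.
move=> x y w.
have [t [a [Tt ->]]] := qfracP x; have [s [b [Ts ->]]] := qfracP y.
have [r [c [Tr ->]]] := qfracP w.
have [z'' [y'' [Tz'' h1]]] := Tore b Tr.
have [z [y0 [Tz h2]]] := Tore a Ts.
have [z' [Y [Tz' h3]]] := Tore y0 Tz''.
have Tzt : T (z * t) by apply: TM.
have Tzs : T (z'' * s) by apply: TM.
have T3 : T (z' * (z * t)) by apply: TM.
have T4 : T ((z' * z) * t) by rewrite -mulrA.
have e3 : z' * (y0 * b) = (Y * y'') * r by rewrite mulrA h3 -!mulrA h1.
have e4 : (z' * z) * a = Y * (z'' * s) by rewrite -mulrA h2 !mulrA h3.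
rewrite (qfrac_mul b Tt Ts Tzt h2) (qfrac_mul c Tzt Tr T3 e3).
by rewrite (qfrac_mul c Ts Tr Tzs h1) (qfrac_mul (y'' * c) Tt Tzs T4 e4) !mulrA.
Qed.

Lemma qmul1 : left_id q1 qmul.
Proof.
move=> x; have [s [b [Ts ->]]] := qfracP x.
by rewrite /q1 (@qfrac_mul _ _ _ _ s 1) ?mulr1 ?mul1r.
Qed.

Lemma qmulr1 : right_id q1 qmul.
Proof.
move=> x; have [t [a [Tt ->]]] := qfracP x.
by rewrite /q1 (@qfrac_mul _ _ _ _ 1 a) ?mulr1 ?mul1r.
Qed.

Lemma qmulDl : left_distributive qmul qadd.
Proof.
apply: qfrac_ind2 => d a b Td w; have [r [c [Tr ->]]] := qfracP w.
rewrite qfrac_add_same //.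
have [z1 [y1 [Tz1 h1]]] := Tore a Tr.
have [z2 [y2 [Tz2 h2]]] := Tore (z1 * b) Tr.
have TZ : T (z2 * z1 * d) by apply: TM => //; apply: TM.
have e1 : (z2 * z1) * (a + b) = (z2 * y1 + y2) * r.
  by rewrite mulrDr mulrDl -!mulrA h1 -h2 mulrA.
have e2 : (z2 * z1) * a = (z2 * y1) * r by rewrite -!mulrA h1.
have e3 : (z2 * z1) * b = y2 * r by rewrite -mulrA h2.
rewrite (qfrac_mul c Td Tr TZ e1) (qfrac_mul c Td Tr TZ e2) (qfrac_mul c Td Tr TZ e3).
by rewrite qfrac_add_same // mulrDl.
Qed.

Lemma qmulDr : right_distributive qmul qadd.
Proof.
move=> x; have [t [a [Tt ->]]] := qfracP x.
apply: qfrac_ind2 => d b c Td; rewrite qfrac_add_same //.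
have [z [w [Tz h]]] := Tore a Td.
have Tzt : T (z * t) by apply: TM.
rewrite (qfrac_mul (b + c) Tt Td Tzt h) (qfrac_mul b Tt Td Tzt h).
by rewrite (qfrac_mul c Tt Td Tzt h) qfrac_add_same // mulrDr.
Qed.

(* The ring structure needs [HT], so the carrier is made to depend on it. *)
Definition ore_loc (_ : reg_ore_set Lside T) := frac_class.

HB.instance Definition _ := gen_eqMixin (ore_loc HT).
HB.instance Definition _ := gen_choiceMixin (ore_loc HT).

Lemma q1_neq0 : (q1 : ore_loc HT) != q0.
Proof. by apply/eqP => /(qfrac_num_inj _ _ T1) /eqP; rewrite oner_eq0. Qed.

HB.instance Definition _ := GRing.isZmodule.Build (ore_loc HT) qaddA qaddC qadd0 qaddN.
HB.instance Definition _ := GRing.Zmodule_isNzRing.Build (ore_loc HT)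
  qmulA qmul1 qmulr1 qmulDl qmulDr q1_neq0.

Lemma ore_mulE (x y : ore_loc HT) : x * y = qmul x y.
Proof. by []. Qed.

Definition ore_frac (a : A) : ore_loc HT := qfrac 1 a.

Lemma ore_frac_nmod : nmod_morphism ore_frac.
Proof. by split=> // a b; rewrite /ore_frac -[LHS](@qfrac_add_same 1 a b T1). Qed.

Lemma ore_frac_monoid : monoid_morphism ore_frac.
Proof. by split=> // a b; rewrite /ore_frac -qfrac1_mul. Qed.

HB.instance Definition _ :=
  GRing.isNmodMorphism.Build A (ore_loc HT) ore_frac ore_frac_nmod.
HB.instance Definition _ :=
  GRing.isMonoidMorphism.Build A (ore_loc HT) ore_frac ore_frac_monoid.

Lemma ore_frac_ring : frac_ring Lside T ore_frac.
Proof.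
split; [|split].
- move=> t Tt; exists (qfrac t 1 : ore_loc HT); rewrite !ore_mulE /ore_frac.
  split; first by rewrite (@qfrac_mul _ _ _ _ 1 1) ?mul1r ?mulr1.
  rewrite /ore_frac (@qfrac_mul _ _ _ _ 1 1) ?mul1r //.
  by rewrite -{2}[t]mulr1 (qfrac_expand 1 T1 Tt) ?mulr1.
- move=> x; have [t [a [Tt ->]]] := qfracP x; exists t, a; split=> //.
  by rewrite ore_mulE /ore_frac (@qfrac_mul _ _ _ _ 1 1) ?mul1r.
- by move=> a /= /(qfrac_num_inj _ _ T1) ->; exists 1; rewrite mulr0.
Qed.

End OreFractions.

Lemma frac_ring_rmorph_eq st (A Q B : nzRingType) (T : A -> Prop)
    (phi : {rmorphism A -> Q}) (h h' : {rmorphism Q -> B}) :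
  frac_ring st T phi -> (forall a, h (phi a) = h' (phi a)) -> forall q, h q = h' q.
Proof.
move=> [phiT fr] e q.
have hu t : T t -> is_unit (h (phi t)) by move=> Tt; apply/is_unit_rmorph/phiT.
case: st fr => [] [fr _]; have [t [a [Tt ta]]] := fr q;
  [apply: (is_unit_mulrI (hu t Tt)) | apply: (is_unit_mulIr (hu t Tt))
  | apply: (is_unit_mulrI (hu t Tt))]; by rewrite -rmorphM ta e (e t) -rmorphM ta.
Qed.

Section OreUniversal.
Variables (A Q B : nzRingType) (T : A -> Prop).
Variables (phi : {rmorphism A -> Q}) (g : {rmorphism A -> B}).
Hypotheses (HT : reg_ore_set Lside T) (phiT : frac_ring Lside T phi) (gT : inverts T g).
Let T1 : T 1 := proj1 (proj1 HT).
Let Tore : left_ore_cond T := proj2 (proj2 HT).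
Let TM : forall x y, T x -> T y -> T (x * y) := proj2 (proj2 (proj1 HT)).
Let phi_fracs : left_fracs T phi := proj1 (proj2 phiT).
Let phi_ker : forall a, phi a = 0 -> exists t, T t /\ t * a = 0 := proj2 (proj2 phiT).

Definition ginv (t : A) : B :=
  if pselect (T t) is left Tt then projT1 (cid (gT Tt)) else 0.

Lemma ginvP t : T t -> g t * ginv t = 1 /\ ginv t * g t = 1.
Proof. by move=> Tt; rewrite /ginv; case: pselect => // Tt'; case: cid. Qed.

Definition qden (q : Q) : A := projT1 (cid (phi_fracs q)).
Definition qnum (q : Q) : A := projT1 (cid (projT2 (cid (phi_fracs q)))).

Lemma qdenP q : T (qden q) /\ phi (qden q) * q = phi (qnum q).
Proof. by rewrite /qnum /qden; case: cid => t /= h; case: cid. Qed.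

(* The extension maps t^-1 a to (g t)^-1 (g a); it depends on [HT] through
   its morphism proofs, hence the extra argument. *)
Definition frac_lift_ (_ : reg_ore_set Lside T) (q : Q) : B :=
  ginv (qden q) * g (qnum q).
Definition frac_lift := frac_lift_ HT.

(* Two representations of [q] differ by an element that [phi] kills, hence one
   annihilated by some [w] in [T]; as [g w] is a unit, [g] kills it too. *)
Lemma frac_liftP q t a : T t -> phi t * q = phi a -> g t * frac_lift q = g a.
Proof.
move=> Tt e; have [Tt0 e0] := qdenP q; rewrite /frac_lift /frac_lift_.
have [t2 [a2 [Tt2 e2]]] := Tore t Tt0.
have phi_diff0 : phi (t2 * a - a2 * qnum q) = 0.
  by rewrite rmorphB !rmorphM -e -e0 !mulrA -!rmorphM e2 subrr.
have [w [Tw hw]] := phi_ker phi_diff0.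
have g_eq : g (t2 * a) = g (a2 * qnum q).
  apply/eqP; rewrite -subr_eq0 -rmorphB; apply/eqP.
  by apply: (is_unit_mulrI (gT Tw)); rewrite -rmorphM hw rmorph0 mulr0.
apply: (is_unit_mulrI (gT Tt2)).
rewrite mulrA -rmorphM e2 rmorphM -!mulrA [g (qden q) * _]mulrA.
by rewrite (proj1 (ginvP Tt0)) mul1r -!rmorphM g_eq.
Qed.

Lemma frac_lift_eq q t a x : T t -> phi t * q = phi a -> g t * x = g a -> frac_lift q = x.
Proof.
by move=> Tt e ex; apply: (is_unit_mulrI (gT Tt)); rewrite ex (frac_liftP Tt e).
Qed.

Lemma frac_lift_phi a : frac_lift (phi a) = g a.
Proof. by apply: (@frac_lift_eq _ 1 a _ T1); rewrite rmorph1 mul1r. Qed.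

Lemma frac_lift_nmod : nmod_morphism frac_lift.
Proof.
split=> [|x y]; first by rewrite -(rmorph0 phi) frac_lift_phi rmorph0.
have [Tt ex] := qdenP x; have [Ts ey] := qdenP y.
have [u [v [Tu huv]]] := Tore (qden x) Ts.
apply: (@frac_lift_eq _ (u * qden x) (u * qnum x + v * qnum y)); first exact: TM.
  rewrite mulrDr rmorphD; congr (_ + _); first by rewrite rmorphM -mulrA ex rmorphM.
  by rewrite huv rmorphM -mulrA ey rmorphM.
rewrite mulrDr rmorphD; congr (_ + _).
  by rewrite rmorphM -mulrA (frac_liftP Tt ex) rmorphM.
by rewrite huv rmorphM -mulrA (frac_liftP Ts ey) rmorphM.
Qed.

Lemma frac_lift_monoid : monoid_morphism frac_lift.
Proof.
split=> [|x y]; first by rewrite -(rmorph1 phi) frac_lift_phi rmorph1.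
have [Tt ex] := qdenP x; have [Ts ey] := qdenP y.
have [s' [a' [Ts' h]]] := Tore (qnum x) Ts.
apply: (@frac_lift_eq _ (s' * qden x) (a' * qnum y)); first exact: TM.
  rewrite !rmorphM -!mulrA [phi (qden x) * _]mulrA ex mulrA -rmorphM h.
  by rewrite rmorphM -mulrA ey.
rewrite !rmorphM -mulrA [g (qden x) * _]mulrA (frac_liftP Tt ex) mulrA -rmorphM h.
by rewrite rmorphM -mulrA (frac_liftP Ts ey).
Qed.

HB.instance Definition _ := GRing.isNmodMorphism.Build Q B frac_lift frac_lift_nmod.
HB.instance Definition _ := GRing.isMonoidMorphism.Build Q B frac_lift frac_lift_monoid.

End OreUniversal.

Section ConverseRmorph.
Variables (X Y : nzRingType) (f : {rmorphism X -> Y}).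
Definition converse_rmorph (x : X^c) : Y^c := f x.
Lemma converse_rmorph_nmod : nmod_morphism converse_rmorph.
Proof. by split=> [|x y]; rewrite /converse_rmorph ?rmorph0 ?rmorphD. Qed.
Lemma converse_rmorph_monoid : monoid_morphism converse_rmorph.
Proof. split=> [|x y]; [exact: (rmorph1 f) | exact: (rmorphM f y x)]. Qed.
HB.instance Definition _ :=
  GRing.isNmodMorphism.Build X^c Y^c converse_rmorph converse_rmorph_nmod.
HB.instance Definition _ :=
  GRing.isMonoidMorphism.Build X^c Y^c converse_rmorph converse_rmorph_monoid.
End ConverseRmorph.

Section UnconverseRmorph.
Variables (X Y : nzRingType) (f : {rmorphism X^c -> Y^c}).
Definition unconverse_rmorph (x : X) : Y := f x.
Lemma unconverse_rmorph_nmod : nmod_morphism unconverse_rmorph.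
Proof. by split=> [|x y]; rewrite /unconverse_rmorph ?rmorph0 ?rmorphD. Qed.
Lemma unconverse_rmorph_monoid : monoid_morphism unconverse_rmorph.
Proof. split=> [|x y]; [exact: (rmorph1 f) | exact: (rmorphM f y x)]. Qed.
HB.instance Definition _ :=
  GRing.isNmodMorphism.Build X Y unconverse_rmorph unconverse_rmorph_nmod.
HB.instance Definition _ :=
  GRing.isMonoidMorphism.Build X Y unconverse_rmorph unconverse_rmorph_monoid.
End UnconverseRmorph.

Section ConverseSwapRmorph.
Variables (X Y : nzRingType) (f : {rmorphism X^c -> Y}).
Definition converse_swap_rmorph (x : X) : Y^c := f x.
Lemma converse_swap_rmorph_nmod : nmod_morphism converse_swap_rmorph.
Proof. by split=> [|x y]; rewrite /converse_swap_rmorph ?rmorph0 ?rmorphD. Qed.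
Lemma converse_swap_rmorph_monoid : monoid_morphism converse_swap_rmorph.
Proof. split=> [|x y]; [exact: (rmorph1 f) | exact: (rmorphM f y x)]. Qed.
HB.instance Definition _ :=
  GRing.isNmodMorphism.Build X Y^c converse_swap_rmorph converse_swap_rmorph_nmod.
HB.instance Definition _ :=
  GRing.isMonoidMorphism.Build X Y^c converse_swap_rmorph converse_swap_rmorph_monoid.
End ConverseSwapRmorph.

Lemma is_unit_converse (Y : nzRingType) (y : Y) : is_unit (y : Y^c) <-> is_unit y.
Proof. by split=> -[z [h1 h2]]; exists z. Qed.

Lemma reg_ore_converse (A : nzRingType) (T : A -> Prop) :
  reg_ore_set Rside T -> reg_ore_set Lside (T : A^c -> Prop).
Proof.
move=> [[? [? TM]] [Treg ?]]; split; [split; [|split]|split] => //.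
- by move=> x y Tx Ty; apply: TM.
- by move=> t /Treg [r1 r2]; split.
Qed.

Lemma frac_ring_lift_l (A Q B : nzRingType) (T : A -> Prop) (phi : {rmorphism A -> Q}) :
  reg_ore_set Lside T -> frac_ring Lside T phi ->
  forall g : {rmorphism A -> B}, inverts T g ->
  exists h : {rmorphism Q -> B}, forall a, h (phi a) = g a.
Proof. by move=> HT phiT g gT; exists (frac_lift HT phiT gT); apply: frac_lift_phi. Qed.

Lemma frac_ring_lift_r (A Q B : nzRingType) (T : A -> Prop) (phi : {rmorphism A -> Q}) :
  reg_ore_set Rside T -> frac_ring Rside T phi ->
  forall g : {rmorphism A -> B}, inverts T g ->
  exists h : {rmorphism Q -> B}, forall a, h (phi a) = g a.
Proof.
move=> /reg_ore_converse HT [phiT ?] g gT.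
have phicT : frac_ring Lside (T : A^c -> Prop) (converse_rmorph phi : {rmorphism A^c -> Q^c}).
  by split=> // t /phiT /is_unit_converse.
have gcT : inverts (T : A^c -> Prop) (converse_rmorph g : {rmorphism A^c -> B^c}).
  by move=> t /gT /is_unit_converse.
have [h hE] := frac_ring_lift_l HT phicT gcT.
by exists (unconverse_rmorph h) => a; apply: hE.
Qed.

Lemma reg_ore_both_l (A : nzRingType) (T : A -> Prop) :
  reg_ore_set Bside T -> reg_ore_set Lside T.
Proof. by case=> ? [? []]. Qed.

Lemma frac_ring_univ_loc st (A Q : nzRingType) (T : A -> Prop) (phi : {rmorphism A -> Q}) :
  reg_ore_set st T -> frac_ring st T phi -> univ_loc T phi.
Proof.
move=> HT phiT; split=> [|B g gT]; first exact: proj1 phiT.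
have [h hE] : exists h : {rmorphism Q -> B}, forall a, h (phi a) = g a.
  case: st HT phiT => HT phiT.
  - exact: frac_ring_lift_l HT phiT g gT.
  - exact: frac_ring_lift_r HT phiT g gT.
  - exact: frac_ring_lift_l (reg_ore_both_l HT) phiT g gT.
exists h; split=> // h' h'E; apply: (frac_ring_rmorph_eq phiT) => a.
by rewrite h'E hE.
Qed.

Lemma frac_ring_exists st (A : nzRingType) (T : A -> Prop) : reg_ore_set st T ->
  exists (Q : nzRingType) (phi : {rmorphism A -> Q}), frac_ring st T phi.
Proof.
case: st => HT.
- by exists (ore_loc HT), (ore_frac HT); apply: ore_frac_ring.
- have HTc := reg_ore_converse HT.
  have [phiT fracs_ker] := ore_frac_ring HTc.
  exists (ore_loc HTc)^c, (converse_swap_rmorph (ore_frac HTc)).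
  by split=> // t /phiT /is_unit_converse.
- have HTl := reg_ore_both_l HT.
  by exists (ore_loc HTl), (ore_frac HTl); apply: ore_frac_ring.
Qed.

Section MulClosure.
Variables (A : nzRingType) (T1 T2 : A -> Prop).

Inductive mulgen : A -> Prop :=
| mulgen1 x : T1 x -> mulgen x
| mulgen2 x : T2 x -> mulgen x
| mulgenM x y : mulgen x -> mulgen y -> mulgen (x * y).

Lemma mulgen_left_ore : left_ore_cond T1 -> left_ore_cond T2 -> left_ore_cond mulgen.
Proof.
move=> o1 o2 a t gt; elim: gt a => [x Tx|x Tx|x y _ IHx _ IHy] a.
- by have [t' [a' [Tt' e]]] := o1 a x Tx; exists t', a'; split=> //; apply: mulgen1.
- by have [t' [a' [Tt' e]]] := o2 a x Tx; exists t', a'; split=> //; apply: mulgen2.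
- have [t1 [a1 [g1 e1]]] := IHy a; have [t2 [a2 [g2 e2]]] := IHx a1.
  exists (t2 * t1), a2; split; first exact: mulgenM.
  by rewrite -mulrA e1 mulrA e2 mulrA.
Qed.

Lemma mulgen_right_ore : right_ore_cond T1 -> right_ore_cond T2 -> right_ore_cond mulgen.
Proof.
move=> o1 o2 a t gt; elim: gt a => [x Tx|x Tx|x y _ IHx _ IHy] a.
- by have [t' [a' [Tt' e]]] := o1 a x Tx; exists t', a'; split=> //; apply: mulgen1.
- by have [t' [a' [Tt' e]]] := o2 a x Tx; exists t', a'; split=> //; apply: mulgen2.
- have [t1 [a1 [g1 e1]]] := IHx a; have [t2 [a2 [g2 e2]]] := IHy a1.
  exists (t1 * t2), a2; split; first exact: mulgenM.
  by rewrite mulrA e1 -mulrA e2 mulrA.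
Qed.

Lemma mulgen_reg_ore st : reg_ore_set st T1 -> reg_ore_set st T2 -> reg_ore_set st mulgen.
Proof.
move=> HT1 HT2; have [[T1_1 _] [reg1 _]] := HT1; have [_ [reg2 _]] := HT2.
have greg t : mulgen t -> regular t.
  by elim=> [x /reg1|x /reg2|x y _ rx _ ry] //; apply: regularM.
split; [split; [exact: mulgen1 | split] | split] => //.
- by move/greg/regular0.
- exact: mulgenM.
apply: on_sideP => hst; [apply: mulgen_left_ore | apply: mulgen_right_ore].
- exact: reg_ore_left hst HT1.
- exact: reg_ore_left hst HT2.
- exact: reg_ore_right hst HT1.
- exact: reg_ore_right hst HT2.
Qed.

End MulClosure.

Lemma reg_ore_Smax st (A : nzRingType) : reg_ore_set st (@Smax A st).
Proof.
have reg_ore1 : reg_ore_set st (fun x : A => x = 1).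
  split; [split; [|split] | split] => //.
  - by move/eqP; rewrite eq_sym oner_eq0.
  - by move=> x y -> ->; rewrite mulr1.
  - by move=> t ->; split=> y; rewrite ?mul1r ?mulr1.
  by apply: on_sideP => _ a t ->; exists 1, a; rewrite mul1r mulr1.
split; [split; [|split] | split].
- by exists (fun x => x = 1).
- by move=> [T [[_ [Treg _]] /Treg /regular0]].
- move=> x y [T1 [HT1 T1x]] [T2 [HT2 T2y]]; exists (mulgen T1 T2).
  by split; [apply: mulgen_reg_ore | apply: mulgenM; [apply: mulgen1 | apply: mulgen2]].
- by move=> t [T [[_ [Treg _]] /Treg]].
apply: on_sideP => hst a t [T [HT Tt]].
- have [t' [a' [Tt' e]]] := reg_ore_left hst HT a Tt.
  by exists t', a'; split=> //; exists T.
- have [t' [a' [Tt' e]]] := reg_ore_right hst HT a Tt.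
  by exists t', a'; split=> //; exists T.
Qed.

Lemma frac_ring_unit_Smax st (A Q : nzRingType) (T : A -> Prop) (phi : {rmorphism A -> Q}) :
  reg_ore_set st T -> frac_ring st T phi -> forall x, is_unit (phi x) -> Smax st x.
Proof.
move=> HT phiT x ux; exists (fun x => is_unit (phi x)); split=> //.
have phi_inj := frac_ring_inj phiT (proj1 (proj2 HT)).
split; [split; [|split] | split].
- by rewrite rmorph1; exists 1; rewrite mulr1.
- by rewrite rmorph0; apply: is_unit0.
- by move=> u v uu uv; rewrite rmorphM; apply: is_unitM.
- move=> t /is_unit_regular [lt rt]; split=> z tz0; apply: phi_inj; rewrite rmorph0.
    by apply: lt; rewrite -rmorphM tz0 rmorph0.
  by apply: rt; rewrite -rmorphM tz0 rmorph0.
apply: on_sideP => hst a t [y [ty yt]].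
- have [t' [b [Tt' e]]] := frac_ring_left_fracs phiT hst (phi a * y).
  exists t', b; split; first exact: (proj1 phiT).
  by apply: phi_inj; rewrite !rmorphM -e -!mulrA yt mulr1.
- have [t' [b [Tt' e]]] := frac_ring_right_fracs phiT hst HT (y * phi a).
  exists t', b; split; first exact: (proj1 phiT).
  by apply: phi_inj; rewrite !rmorphM -e !mulrA ty mul1r.
Qed.

Lemma univ_loc_ker (R A : nzRingType) (S : R -> Prop) (sigma : {rmorphism R -> A}) :
  univ_loc S sigma -> forall r, sigma r = 0 <-> ass S r.
Proof.
move=> [sigmaS univ] r; split=> [r0 B g gS|]; last exact.
by have [h [hE _]] := univ B g gS; rewrite -hE r0 rmorph0.
Qed.

Lemma univ_loc_iso (R A A' : nzRingType) (S : R -> Prop)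
    (sigma : {rmorphism R -> A}) (sigma' : {rmorphism R -> A'}) :
  univ_loc S sigma -> univ_loc S sigma' ->
  exists h : {rmorphism A -> A'}, bijective h /\ forall r, h (sigma r) = sigma' r.
Proof.
move=> [sigmaS univ] [sigma'S univ'].
have [h [hE _]] := univ A' sigma' sigma'S.
have [k [kE _]] := univ' A sigma sigmaS.
have idE (B : nzRingType) (tau : {rmorphism R -> B}) (f : {rmorphism B -> B}) :
    univ_loc S tau -> (forall r, f (tau r) = tau r) -> forall x, f x = x.
  move=> [tauS tau_univ] fE x; have [i [_ iU]] := tau_univ B tau tauS.
  by rewrite (iU f fE) -(iU idfun).
exists h; split=> //; exists k => x.
- by apply: (idE _ _ (k \o h) (conj sigmaS univ)) => r /=; rewrite hE kE.
- by apply: (idE _ _ (h \o k) (conj sigma'S univ')) => r /=; rewrite kE hE.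
Qed.

Section SurjImage.
Variables (R Rb : nzRingType) (pi : {rmorphism R -> Rb}).
Hypothesis pi_surj : forall y, exists r, pi r = y.

Lemma left_fracs_comp (Q : nzRingType) (T : Rb -> Prop) (phi : {rmorphism Rb -> Q}) :
  left_fracs T phi -> left_fracs (fun r => T (pi r)) (phi \o pi).
Proof.
move=> fr q; have [t [b [Tt e]]] := fr q.
by have [[s st] [r rb]] := (pi_surj t, pi_surj b); subst; exists s, r.
Qed.

Lemma right_fracs_comp (Q : nzRingType) (T : Rb -> Prop) (phi : {rmorphism Rb -> Q}) :
  right_fracs T phi -> right_fracs (fun r => T (pi r)) (phi \o pi).
Proof.
move=> fr q; have [t [b [Tt e]]] := fr q.
by have [[s st] [r rb]] := (pi_surj t, pi_surj b); subst; exists s, r.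
Qed.

Section Image.
Variables (A : nzRingType) (S : R -> Prop) (sigma : {rmorphism R -> A}).
Hypotheses (HS : mult_set S) (sigmaS : inverts S sigma).
Hypothesis sigma_ker : forall r, sigma r = 0 <-> pi r = 0.

Definition image_set (y : Rb) : Prop := exists s, S s /\ pi s = y.

Lemma sigma_eq_pi r r' : sigma r = sigma r' <-> pi r = pi r'.
Proof.
split=> e; apply/eqP; rewrite -subr_eq0 -rmorphB; apply/eqP/sigma_ker.
  by rewrite rmorphB e subrr.
by rewrite rmorphB e subrr.
Qed.

Lemma image_mult_set : mult_set image_set.
Proof.
have [S1 [S0 SM]] := HS; split; [|split].
- by exists 1; rewrite rmorph1.
- by move=> [s [/sigmaS us /sigma_ker s0]]; apply: (@is_unit0 A); rewrite -s0.
- move=> _ _ [s [Ss <-]] [s' [Ss' <-]].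
  by exists (s * s'); rewrite rmorphM; split=> //; apply: SM.
Qed.

Lemma image_regular t : image_set t -> regular t.
Proof.
move=> [s [/sigmaS us <-]]; split=> y; have [r <-] := pi_surj y.
  rewrite -rmorphM => /sigma_ker; rewrite rmorphM -(mulr0 (sigma s)).
  by move/(is_unit_mulrI us)/sigma_ker.
rewrite -rmorphM => /sigma_ker; rewrite rmorphM -(mul0r (sigma s)).
by move/(is_unit_mulIr us)/sigma_ker.
Qed.

Lemma image_left_ore : left_fracs S sigma -> left_ore_cond image_set.
Proof.
move=> fr y _ [s [/sigmaS [z [sz zs]] <-]]; have [r <-] := pi_surj y.
have [s1 [r1 [Ss1 e]]] := fr (sigma r * z).
exists (pi s1), (pi r1); split; first by exists s1.
by rewrite -!rmorphM; apply/sigma_eq_pi; rewrite !rmorphM -e -!mulrA zs mulr1.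
Qed.

Lemma image_right_ore : right_fracs S sigma -> right_ore_cond image_set.
Proof.
move=> fr y _ [s [/sigmaS [z [sz zs]] <-]]; have [r <-] := pi_surj y.
have [s1 [r1 [Ss1 e]]] := fr (z * sigma r).
exists (pi s1), (pi r1); split; first by exists s1.
by rewrite -!rmorphM; apply/sigma_eq_pi; rewrite !rmorphM -e !mulrA sz mul1r.
Qed.

End Image.
End SurjImage.

Lemma localizable_univ_loc st (R : nzRingType) (S : R -> Prop) : localizable st S ->
  exists (A : nzRingType) (sigma : {rmorphism R -> A}), univ_loc S sigma.
Proof.
move=> [_]; case: st => /=.
- by move=> [A [sigma [U _]]]; exists A, sigma.
- by move=> [A [sigma [U _]]]; exists A, sigma.
- by move=> [[A [sigma [U _]]] _]; exists A, sigma.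
Qed.

Lemma localizable_image_reg_ore st (R Rb : nzRingType) (pi : {rmorphism R -> Rb})
    (S : R -> Prop) :
  (forall y, exists r, pi r = y) -> (forall r, ass S r <-> pi r = 0) ->
  localizable st S -> reg_ore_set st (image_set pi S).
Proof.
move=> pi_surj ker locS; have [A [sigma U]] := localizable_univ_loc locS.
case: locS => HS sides.
have sigma_ker (B : nzRingType) (tau : {rmorphism R -> B}) :
    univ_loc S tau -> forall r, tau r = 0 <-> pi r = 0.
  by move=> U' r; rewrite (univ_loc_ker U') ker.
split; first exact: (image_mult_set HS (proj1 U) (sigma_ker _ _ U)).
split; first exact: (image_regular pi_surj (proj1 U) (sigma_ker _ _ U)).
apply: on_sideP => hst.
- have [A' [sigma' [U' fr]]] : left_loc S by case: st hst sides => // _ [].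
  exact: (image_left_ore pi_surj (proj1 U') (sigma_ker _ _ U') fr).
- have [A' [sigma' [U' fr]]] : right_loc S by case: st hst sides => // _ [].
  exact: (image_right_ore pi_surj (proj1 U') (sigma_ker _ _ U') fr).
Qed.

Section QuotLift.
Variables (R Rb B : nzRingType) (pi : {rmorphism R -> Rb}) (g : {rmorphism R -> B}).
Hypotheses (pi_surj : forall y, exists r, pi r = y) (g_ker : forall r, pi r = 0 -> g r = 0).

Definition pi_pre (y : Rb) : R := projT1 (cid (pi_surj y)).

Lemma pi_preK y : pi (pi_pre y) = y.
Proof. by rewrite /pi_pre; case: cid. Qed.

(* The morphism proofs need [g_ker], hence the extra argument. *)
Definition quot_lift_ (_ : forall r, pi r = 0 -> g r = 0) (y : Rb) : B := g (pi_pre y).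
Definition quot_lift := quot_lift_ g_ker.

Lemma quot_liftE r : quot_lift (pi r) = g r.
Proof.
apply/eqP; rewrite -subr_eq0 -rmorphB; apply/eqP/g_ker.
by rewrite rmorphB pi_preK subrr.
Qed.

Lemma quot_lift_nmod : nmod_morphism quot_lift.
Proof.
split=> [|y1 y2]; first by rewrite -(rmorph0 pi) quot_liftE rmorph0.
by have [[r1 <-] [r2 <-]] := (pi_surj y1, pi_surj y2); rewrite -rmorphD !quot_liftE rmorphD.
Qed.

Lemma quot_lift_monoid : monoid_morphism quot_lift.
Proof.
split=> [|y1 y2]; first by rewrite -(rmorph1 pi) quot_liftE rmorph1.
by have [[r1 <-] [r2 <-]] := (pi_surj y1, pi_surj y2); rewrite -rmorphM !quot_liftE rmorphM.
Qed.

HB.instance Definition _ := GRing.isNmodMorphism.Build Rb B quot_lift quot_lift_nmod.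
HB.instance Definition _ := GRing.isMonoidMorphism.Build Rb B quot_lift quot_lift_monoid.

End QuotLift.

Lemma univ_loc_preim (R Rb Q : nzRingType) (pi : {rmorphism R -> Rb}) (T : Rb -> Prop)
    (phi : {rmorphism Rb -> Q}) :
  (forall y, exists r, pi r = y) -> univ_loc T phi ->
  (forall (B : nzRingType) (g : {rmorphism R -> B}),
     inverts (fun r => T (pi r)) g -> forall r, pi r = 0 -> g r = 0) ->
  univ_loc (fun r => T (pi r)) (phi \o pi).
Proof.
move=> pi_surj [phiT univ] kill; split=> [r /phiT // | B g gT].
have gbT : inverts T (quot_lift pi_surj (kill B g gT)).
  by move=> y; have [r <-] := pi_surj y; rewrite quot_liftE; apply: gT.
have [h [hE hU]] := univ B _ gbT.
exists h; split=> [r | h' h'E x]; first by rewrite /= hE; apply: quot_liftE.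
by apply: hU => y; have [r <-] := pi_surj y; rewrite h'E; symmetry; apply: quot_liftE.
Qed.

Section Quotient.
Variables (R : nzRingType) (st : side) (a : R -> Prop).
Variables (Rb : nzRingType) (pi : {rmorphism R -> Rb}).
Hypotheses (pi_surj : forall y, exists r, pi r = y) (pi_ker : forall r, pi r = 0 <-> a r).
Variable S : R -> Prop.
Hypothesis HS : loc_ass st a S.

Lemma loc_ass_Smax S' : loc_ass st a S' -> forall s, S' s -> Smax st (pi s).
Proof.
move=> [locS' ass_a] s S's; exists (image_set pi S'); split; last by exists s.
by apply: localizable_image_reg_ore => // r; rewrite ass_a pi_ker.
Qed.

Lemma inverts_Smax_preim_ass (B : nzRingType) (g : {rmorphism R -> B}) :
  inverts (fun r => Smax st (pi r)) g -> forall r, a r -> g r = 0.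
Proof.
move=> gT r ar; have [_ ass_a] := HS; apply: (proj2 (ass_a r) ar) => s Ss.
exact/gT/(loc_ass_Smax HS).
Qed.

Lemma Smax_preim_univ (Qb : nzRingType) (phi : {rmorphism Rb -> Qb}) :
  frac_ring st (Smax st) phi -> univ_loc (fun r => Smax st (pi r)) (phi \o pi).
Proof.
move=> phiT; apply: univ_loc_preim pi_surj _ _.
  exact: frac_ring_univ_loc (reg_ore_Smax st Rb) phiT.
by move=> B g gT r /pi_ker; apply: inverts_Smax_preim_ass.
Qed.

Lemma loc_ass_Smax_preim : loc_ass st a (fun r => Smax st (pi r)).
Proof.
have HSm := reg_ore_Smax st Rb.
have [Qb [phi phiT]] := frac_ring_exists HSm.
have U := Smax_preim_univ phiT.
split; [split|].
- have [[S1 [S0 SM]] _] := HSm; split; [|split]; rewrite ?rmorph1 ?rmorph0 //.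
  by move=> x y Sx Sy; rewrite rmorphM; apply: SM.
- apply: on_sideP => hst; exists Qb, (phi \o pi); split=> //.
    exact/left_fracs_comp/(frac_ring_left_fracs phiT hst).
  exact/right_fracs_comp/(frac_ring_right_fracs phiT hst HSm).
- move=> r; split=> [/(_ Qb _ (proj1 U)) /= | ar B g gT].
    by rewrite -(rmorph0 phi) => /(frac_ring_inj phiT (proj1 (proj2 HSm))) /pi_ker.
  exact: inverts_Smax_preim_ass gT r ar.
Qed.

Lemma Tmax_Smax_preim r : Tmax st a r <-> Smax st (pi r).
Proof.
split=> [[S' [HS' S'r]] | Sr]; first exact: loc_ass_Smax HS' r S'r.
by exists (fun r => Smax st (pi r)); split=> //; apply: loc_ass_Smax_preim.
Qed.

End Quotient.

Unset Implicit Arguments.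

Theorem theorem2p8 (R : nzRingType) (st : side) (a : R -> Prop)
  (ha : in_ass_L st a)
  (Rb : nzRingType) (pi : {rmorphism R -> Rb})
  (pi_surj : forall y : Rb, exists r : R, pi r = y)
  (pi_ker : forall r : R, pi r = 0 <-> a r) :
  (* (1) T_{*,a}(R) = pi^{-1}(S_*(Rbar)) *)
  (forall r : R, Tmax st a r <-> Smax st (pi r)) /\
  (* Q_{*,a}(R) = R<T^{-1}> and Q_*(Rbar) exist *)
  (exists (A : nzRingType) (sigma : {rmorphism R -> A}), univ_loc (Tmax st a) sigma) /\
  (exists (Qb : nzRingType) (phi : {rmorphism Rb -> Qb}), frac_ring st (Smax st) phi) /\
  (forall (A : nzRingType) (sigma : {rmorphism R -> A}), univ_loc (Tmax st a) sigma ->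
   forall (Qb : nzRingType) (phi : {rmorphism Rb -> Qb}), frac_ring st (Smax st) phi ->
     (* (2) R-isomorphism Q_{*,a}(R) ~ Q_*(Rbar) *)
     (exists h : {rmorphism A -> Qb}, bijective h /\ forall r, h (sigma r) = phi (pi r)) /\
     (* (3) T = sigma^{-1}(Q_{*,a}(R)^x) = sigma^{-1}(Q_*(Rbar)^x) *)
     (forall r, Tmax st a r <-> is_unit (sigma r)) /\
     (forall r, Tmax st a r <-> is_unit (phi (pi r)))).
Proof.
have [S HS] := ha.
have TmaxP := Tmax_Smax_preim pi_surj pi_ker HS.
have preim_univ := Smax_preim_univ pi_surj pi_ker HS.
have TmaxE : Tmax st a = (fun r => Smax st (pi r)).
  by apply/funext => r; apply/propext; apply: TmaxP.
have HSm := reg_ore_Smax st Rb.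
have [Qb0 [phi0 phi0T]] := frac_ring_exists HSm.
split; first exact: TmaxP.
split; first by exists Qb0, (phi0 \o pi); rewrite TmaxE; apply: preim_univ.
split; first by exists Qb0, phi0.
move=> A sigma; rewrite TmaxE => sigmaU Qb phi phiT.
have [h [hbij hE]] := univ_loc_iso sigmaU (preim_univ _ _ phiT).
split; first by exists h.
split=> r; split.
- exact: (proj1 sigmaU).
- by move/(is_unit_rmorph h); rewrite hE; apply: (frac_ring_unit_Smax HSm phiT).
- exact: (proj1 phiT).
- exact: (frac_ring_unit_Smax HSm phiT).
Qed.
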